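(* For $n\in \mathbb N_{0}$, \begin{align*} H_{n+1}^{(2)}&=\sum_{j=0}^{n}\binom{n+1}{j+1}\frac{(-1)^{j}}{(j+1)^2} -\sum_{k=0}^{n-1}\frac{1}{k+2}\sum_{j=0}^{k}\binom{k+1}{j+1}\frac{(-1)^{j}}{j+1}\,,\\ H_{n+1}^{(3)}&=\sum_{j=0}^{n}\binom{n+1}{j+1}\frac{(-1)^{j}}{(j+1)^3} -\sum_{j=0}^{n-1}\frac{1}{(j+2)^2}\sum_{\ell=0}^{j}\binom{j+1}{\ell+1}\frac{(-1)^{\ell}}{\ell+1} -\sum_{j=0}^{n-1}\frac{1}{j+2}\sum_{\ell=0}^{j}\binom{j+1}{\ell+1}\frac{(-1)^{\ell}}{(\ell+1)^2}\,. \end{align*}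
   Context: $H_n^{(q)}=\sum_{j=1}^n j^{-q}$ for $q\in\mathbb N$; empty sums are $0$. *)

From mathcomp Require Import all_boot all_order all_algebra.
Set Implicit Arguments. Unset Strict Implicit. Unset Printing Implicit Defensive.
Import Order.TTheory GRing.Theory Num.Theory.
Local Open Scope ring_scope.

Definition harm (q n : nat) : rat := \sum_(1 <= j < n.+1) ((j%:R) ^+ q)^-1.

(** Let [S_q(m) = sum_(j < m) C(m, j+1) (-1)^j / (j+1)^q]; then [S_0(m+1) = 1] by
    the binomial theorem for [(1 - 1)^(m+1)].  Pascal's rule and the absorption
    identity [(j+1) C(m+1, j+1) = (m+1) C(m, j)] give
    [S_(q+1)(m+1) = S_(q+1)(m) + S_q(m+1) / (m+1)].  Unrolling this recurrence in
    [q] writes the increment [S_(q+1)(m+1) - S_(q+1)(m)] as [1/(m+1)^(q+1)], which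
    is also the increment of [H^(q+1)], plus the terms [S_(q-k)(m) / (m+1)^(k+1)]
    for [k < q].  Summing over [m] gives an identity for every exponent [q+1];
    the exponents 2 and 3 are the proposition. *)

From mathcomp Require Import all_boot all_order all_algebra.
From mathcomp Require Import ring.
Import Order.TTheory GRing.Theory Num.Theory.
Local Open Scope ring_scope.

Section BinomHarm.
Variable R : numFieldType.

Definition binom_harm (q m : nat) : R :=
  \sum_(0 <= j < m) ('C(m, j.+1))%:R * (-1) ^+ j / ((j.+1)%:R ^+ q).

Lemma binom_harm0S m : binom_harm 0 m.+1 = 1.
Proof.
have binomial_1_sub_1 :
    (1 - 1) ^+ m.+1 = 1 - \sum_(j < m.+1) ('C(m.+1, j.+1))%:R * (-1) ^+ j :> R.
  rewrite exprBn big_ord_recl subn0 bin0 !expr1n !mulr1 -sumrN.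
  congr (_ + _); apply: eq_bigr => j _.
  by rewrite lift0 exprS !expr1n !mulr1 mulN1r mulNrn mulr_natl.
rewrite subrr expr0n /= in binomial_1_sub_1.
apply/esym/eqP; rewrite -subr_eq0 /binom_harm big_mkord.
by under eq_bigr do rewrite expr0 divr1; rewrite -binomial_1_sub_1.
Qed.

Lemma binom_harmSS q m :
  binom_harm q.+1 m.+1 = binom_harm q.+1 m + binom_harm q m.+1 / m.+1%:R.
Proof.
rewrite /binom_harm; under eq_bigr => j _ do rewrite binS natrD !mulrDl.
rewrite big_split /= [X in X + _]big_nat_recr //= bin_small // !mul0r addr0.
congr (_ + _); rewrite mulr_suml; apply: eq_bigr => j _.
have [m1_neq0 j1_neq0] : m.+1%:R != 0 :> R /\ j.+1%:R != 0 :> R.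
  by rewrite !pnatr_eq0.
have absorption : ('C(m, j))%:R = j.+1%:R * ('C(m.+1, j.+1))%:R / m.+1%:R :> R.
  by rewrite -natrM -mul_bin_diag natrM mulrC mulKf.
rewrite absorption exprS; field.
by rewrite !nat1r m1_neq0 j1_neq0 expf_neq0.
Qed.

Lemma binom_harm_increment q m :
  binom_harm q.+1 m.+1 - binom_harm q.+1 m =
    \sum_(k < q) binom_harm (q - k) m / m.+1%:R ^+ k.+1 + (m.+1%:R ^+ q.+1)^-1.
Proof.
elim: q => [|q IHq].
  by rewrite binom_harmSS addrC addKr binom_harm0S big_ord0 add0r div1r.
rewrite binom_harmSS addrC addKr -(subrK (binom_harm q.+1 m) (binom_harm q.+1 m.+1)) IHq.
rewrite big_ord_recl subn0 !mulrDl mulr_suml.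
under [X in _ = _ + X + _]eq_bigr => k _ do rewrite lift0 subSS exprSr invfM mulrA.
rewrite expr1 [_ ^+ q.+2]exprSr invfM; ring.
Qed.

End BinomHarm.

Arguments binom_harm {R} q m.

Lemma harmS q m : harm q m.+1 = harm q m + (m.+1%:R ^+ q)^-1.
Proof. by rewrite /harm big_nat_recr. Qed.

Lemma harm_binom_harm q n :
  harm q.+1 n.+1 = binom_harm q.+1 n.+1
    - \sum_(0 <= j < n) \sum_(k < q) binom_harm (q - k) j.+1 / j.+2%:R ^+ k.+1.
Proof.
elim: n => [|n IHn].
  by rewrite big_geq // subr0 /harm /binom_harm !big_nat1 binn expr1n invr1 expr0 !mulr1.
rewrite harmS IHn big_nat_recr //=.
rewrite -(subrK (binom_harm q.+1 n.+1) (binom_harm q.+1 n.+2)) binom_harm_increment.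
ring.
Qed.

Theorem proposition3 (n : nat) :
  harm 2 n.+1 =
    \sum_(0 <= j < n.+1) ('C(n.+1, j.+1))%:R * (-1) ^+ j / ((j.+1)%:R ^+ 2)
    - \sum_(0 <= k < n) ((k.+2)%:R)^-1 *
        \sum_(0 <= j < k.+1) ('C(k.+1, j.+1))%:R * (-1) ^+ j / (j.+1)%:R
  /\
  harm 3 n.+1 =
    \sum_(0 <= j < n.+1) ('C(n.+1, j.+1))%:R * (-1) ^+ j / ((j.+1)%:R ^+ 3)
    - \sum_(0 <= j < n) (((j.+2)%:R) ^+ 2)^-1 *
        \sum_(0 <= l < j.+1) ('C(j.+1, l.+1))%:R * (-1) ^+ l / (l.+1)%:R
    - \sum_(0 <= j < n) ((j.+2)%:R)^-1 *
        \sum_(0 <= l < j.+1) ('C(j.+1, l.+1))%:R * (-1) ^+ l / ((l.+1)%:R ^+ 2).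
Proof.
split.
  rewrite (harm_binom_harm 1 n); congr (_ - _); apply: eq_bigr => k _.
  by rewrite big_ord1 expr1 mulrC.
rewrite (harm_binom_harm 2 n).
under eq_bigr do rewrite !big_ord_recl big_ord0 addr0 /=.
rewrite big_split /= opprD addrA addrAC.
by congr (_ - _ - _); apply: eq_bigr => j _; rewrite mulrC.
Qed.
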